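(* Let $p$ be a prime and let $\lambda_1\ge\lambda_2\ge\cdots$ and $\nu_1\ge\nu_2\ge\cdots$ be finitely supported sequences of nonnegative integers with $\nu_i\le\lambda_i$ for all $i$. Then $$\prod_{i\ge1}p^{\nu_i(\lambda_i-\nu_i)}\ \le\ \prod_{i\ge1}p^{\nu_{i+1}(\lambda_i-\nu_i)}\begin{bmatrix}\lambda_i-\nu_{i+1}\\ \nu_i-\nu_{i+1}\end{bmatrix}_p\ \le\ p^{\nu_1}\prod_{i\ge1}p^{\nu_i(\lambda_i-\nu_i)}.$$
   Context: $\begin{bmatrix}\lambda\\ \nu\end{bmatrix}_p$ denotes the $p$-binomial coefficient, i.e. the number of $\nu$-dimensional subspaces of a $\lambda$-dimensional vector space over $\mathbb Z/p\mathbb Z$. *)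

From mathcomp Require Import all_boot.
Set Implicit Arguments. Unset Strict Implicit. Unset Printing Implicit Defensive.

(* Gaussian (q-)binomial coefficient [n choose k]_q, via the q-Pascal rule
   [n+1, k+1]_q = [n, k]_q + q^(k+1) [n, k+1]_q, with [n,0]_q = 1 and
   [0,k+1]_q = 0.  For q = p prime this is the number of k-dimensional
   subspaces of an n-dimensional vector space over Z/pZ. *)
Fixpoint gbinom (q n k : nat) {struct n} : nat :=
  match n, k with
  | _, 0 => 1
  | 0, _.+1 => 0
  | n'.+1, k'.+1 => gbinom q n' k' + q ^ k * gbinom q n' k
  end.

Definition noninc (f : nat -> nat) : Prop := forall i, f i.+1 <= f i.

From mathcomp Require Import all_boot zify.

(* Put k = nu i - nu i.+1 and m = lam i - nu i, so that the i-th factor of the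
   middle product is p ^ (nu i.+1 * m) * [k + m, k]_p.  The Gaussian binomial
   satisfies q ^ (k * m) <= [k + m, k]_q, by the q-Pascal rule, and, for
   q >= 2, [k + m, k]_q <= q ^ (k * (m + 1)), by the dual rule
   [n + 1, k + 1]_q = q ^ (n - k) [n, k]_q + [n, k + 1]_q, whose two terms are
   each at most half the target.  Multiplied over i, the lower bounds give the
   left inequality and the upper ones cost an extra factor
   p ^ (sum_i (nu i - nu i.+1)) = p ^ (nu 0), as nu vanishes where lam does. *)

Lemma gbinom0 q n : gbinom q n 0 = 1.
Proof. by case: n. Qed.

Lemma gbinomS q n k :
  gbinom q n.+1 k.+1 = gbinom q n k + q ^ k.+1 * gbinom q n k.+1.
Proof. by []. Qed.

Lemma gbinom_small q n k : n < k -> gbinom q n k = 0.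
Proof.
elim: n k => [|n IHn] [|k] //= /[!ltnS] lt_nk.
by rewrite IHn // IHn ?muln0 // ltnW.
Qed.

Lemma gbinomnn q n : gbinom q n n = 1.
Proof. by elim: n => //= n ->; rewrite gbinom_small ?muln0. Qed.

Lemma gbinomS_dual q k m :
  gbinom q (k + m).+1 k.+1 = q ^ m * gbinom q (k + m) k + gbinom q (k + m) k.+1.
Proof.
elim: m k => [|m IHm] k.
  by rewrite addn0 gbinomS gbinomnn gbinom_small // muln0 mul1n addn0.
elim: k => [|k IHk].
  have := IHm 0; rewrite !add0n !gbinomS !gbinom0 => IH0.
  by rewrite {1}IH0 !expnS expn0; lia.
move: IHk (IHm k.+1); rewrite !addSn !addnS => IHk IHm'.
rewrite [in RHS](gbinomS q (k + m).+1 k) [in RHS](gbinomS q (k + m).+1 k.+1).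
rewrite [LHS]gbinomS IHk IHm' mulnDr mulnA.
have -> : q ^ k.+2 * q ^ m = q ^ m.+1 * q ^ k.+1 by rewrite -!expnD addSnnS addnC.
lia.
Qed.

Lemma expn_le_gbinom q k m : q ^ (k * m) <= gbinom q (k + m) k.
Proof.
elim: m k => [|m IHm] [|k]; rewrite ?gbinom0 ?muln0 ?addn0 ?gbinomnn //.
rewrite addSn addnS gbinomS mulnS expnD.
exact: leq_trans (leq_mul (leqnn _) (IHm k.+1)) (leq_addl _ _).
Qed.

Lemma gbinom_le_expn q k m : 1 < q -> gbinom q (k + m) k <= q ^ (k * m.+1).
Proof.
move=> q_gt1; elim: k m => [|k IHk] m; first by rewrite gbinom0.
elim: m => [|m IHm]; first by rewrite addn0 gbinomnn expn_gt0 ltnW.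
set e := k * m.+2 + m.+1.
have -> : k.+1 * m.+2 = e.+1 by rewrite /e; lia.
have le_first : q ^ m.+1 * gbinom q (k + m.+1) k <= q ^ e.
  by rewrite /e (addnC (k * _)) expnD leq_mul ?IHk.
have le_second : gbinom q (k + m.+1) k.+1 <= q ^ e.
  rewrite addnS -addSn; apply: leq_trans IHm _.
  by rewrite leq_pexp2l ?(ltnW q_gt1) // /e; lia.
rewrite addSn gbinomS_dual [q ^ e.+1]expnS.
apply: leq_trans (leq_add le_first le_second) _.
by rewrite addnn -mul2n leq_mul2r q_gt1 orbT.
Qed.

Lemma expn_le_gbinom_sub q a b c : a <= b -> b <= c ->
  q ^ (b * (c - b)) <= q ^ (a * (c - b)) * gbinom q (c - a) (b - a).
Proof.
move=> le_ab le_bc.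
have -> : c - a = (b - a) + (c - b) by lia.
have -> : b * (c - b) = a * (c - b) + (b - a) * (c - b) by rewrite -mulnDl subnKC.
by rewrite expnD leq_mul ?expn_le_gbinom.
Qed.

Lemma gbinom_sub_le_expn q a b c : 1 < q -> a <= b -> b <= c ->
  q ^ (a * (c - b)) * gbinom q (c - a) (b - a) <= q ^ (b - a) * q ^ (b * (c - b)).
Proof.
move=> q_gt1 le_ab le_bc.
have -> : c - a = (b - a) + (c - b) by lia.
have -> : b * (c - b) = a * (c - b) + (b - a) * (c - b) by rewrite -mulnDl subnKC.
rewrite expnD mulnCA leq_mul // -expnD -mulnS.
exact: gbinom_le_expn.
Qed.

Lemma telescope_sumn_noninc (u : nat -> nat) n : noninc u ->
  \sum_(i < n) (u i - u i.+1) = u 0 - u n.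
Proof.
move=> u_noninc; have le_u0 j : u j <= u 0.
  by elim: j => // j; apply: leq_trans (u_noninc j).
elim: n => [|n IHn]; first by rewrite big_ord0 subnn.
by rewrite big_ord_recr /= IHn; have := u_noninc n; have := le_u0 n; lia.
Qed.

Theorem proposition6p3 (p : nat) (lam nu : nat -> nat) (N : nat) :
  prime p -> noninc lam -> noninc nu ->
  (forall i, N <= i -> lam i = 0) ->
  (forall i, nu i <= lam i) ->
  \prod_(i < N) p ^ (nu i * (lam i - nu i))
    <= \prod_(i < N) (p ^ (nu i.+1 * (lam i - nu i))
                       * gbinom p (lam i - nu i.+1) (nu i - nu i.+1))
  /\
  \prod_(i < N) (p ^ (nu i.+1 * (lam i - nu i))
                  * gbinom p (lam i - nu i.+1) (nu i - nu i.+1))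
    <= p ^ (nu 0) * \prod_(i < N) p ^ (nu i * (lam i - nu i)).
Proof.
move=> /prime_gt1 p_gt1 _ nu_noninc lam_supp nu_le_lam.
have nuN0 : nu N = 0 by apply/eqP; rewrite -leqn0 -(lam_supp N (leqnn N)) nu_le_lam.
split; first by apply: leq_prod => i _; exact: expn_le_gbinom_sub.
have nu0E : \sum_(i < N) (nu i - nu i.+1) = nu 0.
  by rewrite telescope_sumn_noninc // nuN0 subn0.
rewrite -nu0E expn_sum -big_split /=.
by apply: leq_prod => i _; exact: gbinom_sub_le_expn.
Qed.
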